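(* Consider a switching non-stationary Markov reward process as described in the context. Let $\mathcal{X}=\{(s,s',e)\in\mathcal{S}\times\mathcal{S}\times\mathcal{E}: p_e(s'\mid s)>0\}$. Then the sequence $X_k=(S_k,S_{k+1},E_k)$ is a Markov chain on $\mathcal{X}$ whose transition probability from $x=(s_1,s_2,e)$ to $x'=(s_1',s_2',e')$ is $$z(x'\mid x)=\begin{cases}p_{e'}(s_2'\mid s_2)\,q(e'\mid e)&\text{if } s_2=s_1',\\ 0&\text{otherwise.}\end{cases}$$
   Context: The process has a finite state set $\mathcal{S}$, a finite set of environment states $\mathcal{E}$, for each $e\in\mathcal{E}$ a transition probability function $p_e(s'\mid s)$ on $\mathcal{S}$, and a Markov chain on $\mathcal{E}$ with transition probabilities $q(e'\mid e)$. It generates $(S_k,E_k)_{k\ge0}$ from an arbitrary initial distribution such that, given the entire past $(S_0,E_0,\dots,S_k,E_k)$, $S_{k+1}\sim p_{E_k}(\cdot\mid S_k)$ and $E_{k+1}\sim q(\cdot\mid E_k)$ independently. *)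

From HB Require Import structures.
From mathcomp Require Import all_boot all_order all_algebra.
From mathcomp Require Import all_classical all_reals all_analysis.
Set Implicit Arguments. Unset Strict Implicit. Unset Printing Implicit Defensive.
Import Order.TTheory GRing.Theory Num.Theory.
Local Open Scope classical_set_scope.
Local Open Scope ring_scope.

(* Environment-dependent kernel p e s s' = p_e(s' | s) is stochastic. *)
Definition stoch_family (S E : finType) (R : realType) (p : E -> S -> S -> R) :=
  (forall e s s', 0 <= p e s s') /\ (forall e s, \sum_(s' : S) p e s s' = 1).

Definition stoch (E : finType) (R : realType) (q : E -> E -> R) :=
  (forall e e', 0 <= q e e') /\ (forall e, \sum_(e' : E) q e e' = 1).

Definition hist (T S E : Type) (Sk : nat -> T -> S) (Ek : nat -> T -> E)
  (n : nat) (ss : nat -> S) (es : nat -> E) : set T :=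
  [set w | forall i, (i <= n)%N -> Sk i w = ss i /\ Ek i w = es i].

(* The pair process X_k = (S_k, S_{k+1}, E_k), encoded as ((s, s'), e). *)
Definition Xproc (T S E : Type) (Sk : nat -> T -> S) (Ek : nat -> T -> E)
  (k : nat) (w : T) : S * S * E := (Sk k w, Sk k.+1 w, Ek k w).

Definition inX (S E : finType) (R : realType) (p : E -> S -> S -> R)
  (x : S * S * E) : bool := 0 < p x.2 x.1.1 x.1.2.

Definition ztrans (S E : finType) (R : realType) (p : E -> S -> S -> R)
  (q : E -> E -> R) (x x' : S * S * E) : R :=
  if x.1.2 == x'.1.1 then p x'.2 x.1.2 x'.1.2 * q x.2 x'.2 else 0.

(* Summing the hypothesis over the finitely many values of E_{n+1} (law of
   total probability) shows that, given the history up to time n, S_{n+1} has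
   law p_{E_n}(.|S_n).  An event {X_0 = x_0, ..., X_m = x_m} is empty unless
   consecutive triples are chained (the second state of x_i is the first state
   of x_{i+1}); then it is the history event of (S_i, E_i)_{i <= m} intersected
   with {S_{m+1} = second state of x_m}, so its probability is the probability
   of that history times a value of p, and comparing m = n with m = n + 1
   produces the factor z(x_{n+1} | x_n).  Likewise, X_k leaves the state space
   only on histories whose last transition has probability 0: a finite union
   of null events. *)

From HB Require Import structures.
From mathcomp Require Import all_boot all_order all_algebra.
From mathcomp Require Import all_classical all_reals all_analysis.
Import Order.TTheory GRing.Theory Num.Theory.
Local Open Scope classical_set_scope.
Local Open Scope ring_scope.

Section finite_valued_map.
Context {d} {T : measurableType d} {R : realType}.
Variable mu : {measure set T -> \bar R}.
Context {I : finType} {f : T -> I}.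
Hypothesis mf : forall i, measurable (f @^-1` [set i]).

Lemma measurable_preimage_fin (D : set I) : measurable (f @^-1` D).
Proof.
have -> : f @^-1` D = \bigcup_(i in D) f @^-1` [set i].
  by apply/seteqP; split => [w Dw|w [i Di /= ->]] //; exists (f w).
exact: fin_bigcup_measurable.
Qed.

Lemma measure_sum_fibers {A : set T} : measurable A ->
  mu A = (\sum_(i : I) mu (A `&` f @^-1` [set i]))%E.
Proof.
move=> mA; have {1}-> : A = \bigcup_(i in [set: I]) (A `&` f @^-1` [set i]).
  by apply/seteqP; split => [w Aw|w [i _ []]] //; exists (f w).
rewrite measure_fin_bigcup //; last by move=> i _; exact: measurableI.
- rewrite (fsbigE (index_enum I)) ?index_enum_uniq //=.
    by apply: eq_bigl => i; rewrite in_setT.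
  by move=> i _; rewrite mem_index_enum.
- exact: finite_finset.
- exact: trivIset_preimage1_in.
Qed.

Lemma measure_preimage_fibers0 (D : set I) :
  (forall i, D i -> mu (f @^-1` [set i]) = 0%E) -> mu (f @^-1` D) = 0%E.
Proof.
move=> D0; rewrite (measure_sum_fibers (measurable_preimage_fin D)).
apply: big1 => i _; have [Di|nDi] := pselect (D i).
  apply: (subset_measure0 _ (mf i)) (D0 i Di) => [|w []//].
  exact: measurableI (measurable_preimage_fin _) (mf i).
have -> : f @^-1` D `&` f @^-1` [set i] = set0.
  by apply/seteqP; split => // w [/= + fwi]; rewrite fwi.
exact: measure0.
Qed.

End finite_valued_map.

Section transition_kernel.
Variables (R : realType) (S E : finType).
Variables (p : E -> S -> S -> R) (q : E -> E -> R).

Lemma ztrans_ge0 x x' :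
  (forall e s s', 0 <= p e s s') -> (forall e e', 0 <= q e e') ->
  0 <= ztrans p q x x'.
Proof.
by move=> p0 q0; rewrite /ztrans; case: ifP => // _; exact: mulr_ge0.
Qed.

Lemma ztrans_notinX x x' : (forall e s s', 0 <= p e s s') -> ~~ inX p x' ->
  ztrans p q x x' = 0.
Proof.
move=> p0; rewrite /inX -leNgt => p_le0.
rewrite /ztrans; case: ifP => // /eqP ->.
have -> : p x'.2 x'.1.1 x'.1.2 = 0 by apply/eqP; rewrite eq_le p_le0 p0.
by rewrite mul0r.
Qed.

Lemma sum_ztrans x : stoch_family p -> stoch q -> \sum_x' ztrans p q x x' = 1.
Proof.
case: x => [[s1 s2] e] [_ p1] [_ q1].
pose z x' := ztrans p q (s1, s2, e) x'.
rewrite -(pair_big xpredT xpredT (fun y e' => z (y, e'))) /=.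
rewrite -(pair_big xpredT xpredT (fun s1' s2' => \sum_e' z (s1', s2', e'))) /=.
rewrite (bigD1 s2) //= [X in _ + X]big1 ?addr0 => [|s1' /negbTE s1'_neq];
  last first.
  by do 2!apply: big1 => ? _; rewrite /z /ztrans /= eq_sym s1'_neq.
rewrite exchange_big /= -[RHS](q1 e); apply: eq_bigr => e' _.
by rewrite /z /ztrans /= eqxx -big_distrl /= p1 mul1r.
Qed.

Lemma sum_ztrans_inX x : stoch_family p -> stoch q ->
  \sum_(x' | inX p x') ztrans p q x x' = 1.
Proof.
move=> hp hq; rewrite -(sum_ztrans x hp hq) [RHS](bigID (inX p)) /=.
by rewrite [X in _ + X]big1 ?addr0 // => x'; exact: ztrans_notinX hp.1.
Qed.

End transition_kernel.

Lemma histS (T S E : Type) (Sk : nat -> T -> S) (Ek : nat -> T -> E) n ss es :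
  hist Sk Ek n.+1 ss es =
  hist Sk Ek n ss es `&` [set w | Sk n.+1 w = ss n.+1 /\ Ek n.+1 w = es n.+1].
Proof.
apply/seteqP; split => w /=.
- by move=> ss_es; split=> [i /leqW|]; exact: ss_es.
- move=> [ss_es last_es] i; rewrite leq_eqVlt => /orP [/eqP -> //|].
  exact: ss_es.
Qed.

(* The history (S_i, E_i)_{i <= k} as a point of a finite type, so that one
   can sum over all histories. *)
Definition past {T S E : Type} (Sk : nat -> T -> S) (Ek : nat -> T -> E) k w :
  {ffun 'I_k.+1 -> S * E} := [ffun i : 'I_k.+1 => (Sk i w, Ek i w)].

Definition chained {S : eqType} {E : Type} (xs : nat -> S * S * E) m :=
  all (fun i => (xs i).1.2 == (xs i.+1).1.1) (iota 0 m).

Lemma chainedS {S : eqType} {E : Type} (xs : nat -> S * S * E) m :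
  chained xs m.+1 = chained xs m && ((xs m).1.2 == (xs m.+1).1.1).
Proof. by rewrite /chained -[in iota _ _]addn1 iotaD all_cat /= andbT. Qed.

Definition Xpath {T S E : Type} (Sk : nat -> T -> S) (Ek : nat -> T -> E) m
  (xs : nat -> S * S * E) : set T :=
  [set w | forall i, (i <= m)%N -> Xproc Sk Ek i w = xs i].

Section switching_process.
Context {R : realType} {d : measure_display} {T : measurableType d}.
Variable P : probability T R.
Context {S E : finType} {p : E -> S -> S -> R} {q : E -> E -> R}.
Context {Sk : nat -> T -> S} {Ek : nat -> T -> E}.
Hypotheses (p_stoch : stoch_family p) (q_stoch : stoch q).
Hypothesis mSk : forall k s, measurable (Sk k @^-1` [set s]).
Hypothesis mEk : forall k e, measurable (Ek k @^-1` [set e]).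
Hypothesis step_law : forall n ss es s' e',
  P (hist Sk Ek n ss es `&` [set w | Sk n.+1 w = s' /\ Ek n.+1 w = e'])
  = (P (hist Sk Ek n ss es) * (p (es n) (ss n) s' * q (es n) e')%:E)%E.

Lemma measurable_hist n ss es : measurable (hist Sk Ek n ss es).
Proof.
elim: n => [|n IHn]; last first.
  rewrite histS; apply: measurableI IHn _.
  exact: measurableI (mSk _ _) (mEk _ _).
have -> : hist Sk Ek 0 ss es = Sk 0 @^-1` [set ss 0] `&` Ek 0 @^-1` [set es 0].
  apply/seteqP; split => w /=; first by move/(_ 0%N isT).
  by move=> ss_es i; rewrite leqn0 => /eqP ->.
exact: measurableI.
Qed.

Lemma hist_next_state n ss es s' :
  P (hist Sk Ek n ss es `&` [set w | Sk n.+1 w = s'])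
  = (P (hist Sk Ek n ss es) * (p (es n) (ss n) s')%:E)%E.
Proof.
have mA : measurable (hist Sk Ek n ss es `&` [set w | Sk n.+1 w = s']).
  exact: measurableI (measurable_hist _ _ _) (mSk _ _).
rewrite (measure_sum_fibers P (mEk n.+1) mA).
rewrite (eq_bigr (fun e' => P (hist Sk Ek n ss es)
                            * (p (es n) (ss n) s' * q (es n) e')%:E)%E);
  last by move=> e' _; rewrite -setIA; exact: step_law.
rewrite -ge0_sume_distrr => [|e' _];
  last by rewrite lee_fin mulr_ge0 ?p_stoch.1 ?q_stoch.1.
by rewrite sumEFin -mulr_sumr q_stoch.2 mulr1.
Qed.

Lemma past_preimage k (h : {ffun 'I_k.+1 -> S * E}) :
  past Sk Ek k @^-1` [set h] =
  hist Sk Ek k (fun i => (h (inord i)).1) (fun i => (h (inord i)).2).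
Proof.
apply/seteqP; split => w /=.
  by move=> <- i ik; rewrite ffunE inordK.
move=> past_h; apply/ffunP => i; rewrite ffunE.
have [-> ->] := past_h i (ltn_ord i).
by rewrite inord_val; case: (h i).
Qed.

Lemma measure_Xproc_notinX k : P [set w | ~~ inX p (Xproc Sk Ek k w)] = 0%E.
Proof.
pose f w := (past Sk Ek k w, Sk k.+1 w).
have fiberE h s' :
    f @^-1` [set (h, s')] =
    past Sk Ek k @^-1` [set h] `&` Sk k.+1 @^-1` [set s'].
  by apply/seteqP; split => w; rewrite /= /f => -[-> ->].
have mf y : measurable (f @^-1` [set y]).
  case: y => h s'; rewrite fiberE past_preimage.
  exact: measurableI (measurable_hist _ _ _) (mSk _ _).
have -> : [set w | ~~ inX p (Xproc Sk Ek k w)] =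
    f @^-1` [set y : {ffun 'I_k.+1 -> S * E} * S |
             ~~ (0 < p (y.1 (inord k)).2 (y.1 (inord k)).1 y.2)].
  by apply/seteqP; split => w; rewrite /= ffunE inordK.
apply: (measure_preimage_fibers0 P mf) => -[h s'] /= p_le0.
rewrite fiberE past_preimage hist_next_state.
have -> : p (h (inord k)).2 (h (inord k)).1 s' = 0.
  by apply/eqP; rewrite eq_le leNgt p_le0 p_stoch.1.
by rewrite mule0.
Qed.

Lemma Xpath_chained m xs : chained xs m ->
  Xpath Sk Ek m xs =
  hist Sk Ek m (fun i => (xs i).1.1) (fun i => (xs i).2)
  `&` [set w | Sk m.+1 w = (xs m).1.2].
Proof.
move=> /allP chain; apply/seteqP; split => w /=.
  move=> X_xs; split; last by rewrite -(X_xs m (leqnn m)).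
  by move=> i im; rewrite -(X_xs i im).
move=> [S_E_xs S_last] i im; rewrite /Xproc; have [-> ->] := S_E_xs i im.
suff -> : Sk i.+1 w = (xs i).1.2 by case: (xs i) => [[]].
move: im; rewrite leq_eqVlt => /orP [/eqP -> //|im].
rewrite (eqP (chain i _)) ?mem_iota //.
by have [] := S_E_xs i.+1 im.
Qed.

Lemma Xpath_unchained m xs : ~~ chained xs m -> Xpath Sk Ek m xs = set0.
Proof.
move=> /negP unchained; apply/seteqP; split => // w X_xs; apply: unchained.
apply/allP => i; rewrite mem_iota add0n => /andP [_ im].
by rewrite -(X_xs i (ltnW im)) -(X_xs i.+1 im).
Qed.

Lemma measure_Xpath m xs : P (Xpath Sk Ek m xs) =
  if chained xs m then
    (P (hist Sk Ek m (fun i => (xs i).1.1) (fun i => (xs i).2))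
     * (p (xs m).2 (xs m).1.1 (xs m).1.2)%:E)%E
  else 0%E.
Proof.
case: ifPn => [/Xpath_chained ->|/Xpath_unchained ->]; last exact: measure0.
exact: hist_next_state.
Qed.

Lemma measure_XpathS n xs :
  P (Xpath Sk Ek n.+1 xs) =
  (P (Xpath Sk Ek n xs) * (ztrans p q (xs n) (xs n.+1))%:E)%E.
Proof.
rewrite !measure_Xpath chainedS /ztrans.
have [chain|] := boolP (chained xs n); last by rewrite mul0e.
have [link|] := eqVneq (xs n).1.2 (xs n.+1).1.1; last by rewrite mule0.
by rewrite histS step_law -link -!muleA -!EFinM /= mulrAC mulrA.
Qed.

End switching_process.

Theorem lemma4 (R : realType) (d : measure_display) (T : measurableType d)
  (P : probability T R) (S E : finType)
  (p : E -> S -> S -> R) (q : E -> E -> R)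
  (Sk : nat -> T -> S) (Ek : nat -> T -> E) :
  stoch_family p -> stoch q ->
  (forall k s, measurable (Sk k @^-1` [set s])) ->
  (forall k e, measurable (Ek k @^-1` [set e])) ->
  (* given the past, S_{n+1} ~ p_{E_n}(.|S_n) and E_{n+1} ~ q(.|E_n) independently *)
  (forall n (ss : nat -> S) (es : nat -> E) (s' : S) (e' : E),
     P (hist Sk Ek n ss es `&` [set w | Sk n.+1 w = s' /\ Ek n.+1 w = e'])
     = (P (hist Sk Ek n ss es) * (p (es n) (ss n) s' * q (es n) e')%:E)%E) ->
  (* X_k takes values in the state space almost surely *)
  (forall k, P [set w | ~~ inX p (Xproc Sk Ek k w)] = 0%E) /\
  (* z is a transition probability on the state space *)
  (forall x x', inX p x -> inX p x' -> 0 <= ztrans p q x x') /\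
  (forall x, inX p x -> \sum_(x' | inX p x') ztrans p q x x' = 1) /\
  (* Markov property of (X_k) with transition z *)
  (forall n (xs : nat -> S * S * E), (forall i, (i <= n.+1)%N -> inX p (xs i)) ->
     P [set w | forall i, (i <= n.+1)%N -> Xproc Sk Ek i w = xs i]
     = (P [set w | forall i, (i <= n)%N -> Xproc Sk Ek i w = xs i]
       * (ztrans p q (xs n) (xs n.+1))%:E)%E).
Proof.
move=> p_stoch q_stoch mSk mEk step; split; last split; last split.
- exact: (measure_Xproc_notinX P p_stoch q_stoch mSk mEk step).
- by move=> x x' _ _; apply: ztrans_ge0 p_stoch.1 q_stoch.1.
- by move=> x _; apply: sum_ztrans_inX.
- by move=> n xs _; exact: (measure_XpathS P p_stoch q_stoch mSk mEk step).
Qed.
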